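(* Let $L\ge6$ be an even integer, let $\xi=(\xi_k)$ be i.i.d. $N(0,1)$, and let $X=(X_k,k\in\mathbb Z)$ be a sequence of real random variables with finite $L$-th moments such that for every integer $n\ge0$ and every integer $h\ge 4L^{n+1}$, $$E[S(X,h)/\sqrt h]^L\le h^{-L/2}\sum_{j=1}^h\binom hj\left(\tfrac12\right)^hE(S(\xi,j))^L-h^{-L/2}\cdot L!\cdot2^{-L}\cdot(L^n)^{L/2}\sum_{j=2L^{n+1}}^h\binom hj\left(\tfrac12\right)^h.$$ Then for every integer $h\ge 4L$, $$E[S(X,h)/\sqrt h]^L\le h^{-L/2}\sum_{j=1}^h\binom hj\left(\tfrac12\right)^hE(S(\xi,j))^L-2^{-(5L+2)/2}\cdot L!\cdot L^{-L}.$$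
   Context: $S(X,h):=X_1+\dots+X_h$, and similarly for $\xi$. *)

From Stdlib Require Import Reals List Arith.
Open Scope R_scope.

(* sumR a b f = f a + f (a+1) + ... + f b ; empty (= 0) when b < a. *)
Definition sumR (a b : nat) (f : nat -> R) : R :=
  fold_right Rplus 0 (map f (seq a (S b - a))).

(* The common right-hand "main term":
   h^{-L/2} * sum_{j=1}^h C(h,j) (1/2)^h * g j,
   where g j stands for E (S(xi,j))^L.  L is even, so h^{-L/2} = 1/h^(L/2). *)
Definition main_term (L h : nat) (g : nat -> R) : R :=
  / (INR h ^ (L / 2)) *
  sumR 1 h (fun j => Binomial.C h j * (/ 2) ^ h * g j).

(* Write L = 2M.  Given h >= 4L, pick the scale n with
   4 L^(n+1) <= h < 4 L^(n+2) (lemma [scale_bracket]) and apply the hypothesis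
   at that n.  It remains to bound from below the term it subtracts,
     h^-M * L! * 2^-L * (L^n)^M * T,   T = sum_{j >= 2L^(n+1)} C(h,j) 2^-h.
   Two facts do this:
   - since 2 * (2 L^(n+1)) <= h, the tail T is at least 1/2, because by the
     symmetry C(h,j) = C(h,h-j) the lower part of the binomial sum is dominated
     by the upper part ([binomial_upper_tail_ge_half]);
   - since h < 4 L^(n+2), h^M <= 2^L L^L (L^n)^M ([pow_half_bound]).
   Together the subtracted term is at least L! / (2^(2L+1) L^L)
   ([penalty_lower_bound]), and since 2L+1 = 4M+1 <= 5M+1 = (5L+2)/2 this
   dominates the penalty of the conclusion ([penalty_weaken_exponent]). *)
From Stdlib Require Import Reals Lra Lia List Arith.
Open Scope R_scope.

Lemma fold_right_seq_sum (f : nat -> R) (n k : nat) :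
  fold_right Rplus 0 (map f (seq k (S n))) = sum_f_R0 (fun i => f (k + i)%nat) n.
Proof.
  revert k; induction n as [|n IHn]; intros k.
  - simpl. rewrite Nat.add_0_r. lra.
  - change (f k + fold_right Rplus 0 (map f (seq (S k) (S n))) =
            sum_f_R0 (fun i => f (k + i)%nat) (S n)).
    rewrite IHn, (decomp_sum (fun i => f (k + i)%nat) (S n)) by lia.
    rewrite Nat.add_0_r. simpl pred. f_equal.
    apply sum_eq. intros i _. f_equal. lia.
Qed.

Lemma sumR_sum_f_R0 (f : nat -> R) (k h : nat) : (k <= h)%nat ->
  sumR k h f = sum_f_R0 (fun i => f (k + i)%nat) (h - k).
Proof.
  intros Hkh. unfold sumR.
  replace (S h - k)%nat with (S (h - k)) by lia.
  apply fold_right_seq_sum.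
Qed.

Lemma sum_f_R0_rev (a : nat -> R) (N : nat) :
  sum_f_R0 (fun i => a (N - i)%nat) N = sum_f_R0 a N.
Proof.
  induction N as [|N IHN].
  - reflexivity.
  - rewrite decomp_sum by lia. simpl pred. rewrite Nat.sub_0_r.
    rewrite (sum_eq _ (fun i => a (N - i)%nat)) by (intros; f_equal; lia).
    rewrite IHN. simpl. lra.
Qed.

Lemma C_nonneg (n k : nat) : 0 <= C n k.
Proof.
  unfold C. apply Rle_mult_inv_pos; [apply pos_INR |].
  apply Rmult_lt_0_compat; apply lt_0_INR, lt_O_fact.
Qed.

(* For 2k <= h, the binomial coefficients C(h,j) with j < k sum to at most
   those with j >= k: reflect j to h - j >= h - k + 1 > k - 1. *)
Lemma binomial_lower_le_upper (h k : nat) : (1 <= k)%nat -> (2 * k <= h)%nat ->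
  sum_f_R0 (fun i => C h i) (k - 1) <= sum_f_R0 (fun i => C h (k + i)%nat) (h - k).
Proof.
  intros Hk Hkh.
  rewrite <- (sum_f_R0_rev (fun i => C h (k + i)%nat) (h - k)).
  rewrite (tech2 _ (k - 1) (h - k)) by lia.
  assert (Hreflect : sum_f_R0 (fun i => C h i) (k - 1) =
                     sum_f_R0 (fun i => C h (k + (h - k - i))%nat) (k - 1)).
  { apply sum_eq. intros i Hi. rewrite pascal_step1 by lia. f_equal. lia. }
  assert (Hrest : 0 <= sum_f_R0 (fun i => C h (k + (h - k - (S (k - 1) + i)))%nat)
                                (h - k - S (k - 1)))
    by (apply cond_pos_sum; intros; apply C_nonneg).
  lra.
Qed.

Lemma binomial_upper_tail_ge_half (h k : nat) : (1 <= k)%nat -> (2 * k <= h)%nat ->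
  / 2 <= sumR k h (fun j => C h j * (/ 2) ^ h).
Proof.
  intros Hk Hkh.
  rewrite sumR_sum_f_R0 by lia. rewrite <- scal_sum.
  pose proof (binomial_lower_le_upper h k Hk Hkh) as Hlow.
  set (upper := sum_f_R0 (fun i => C h (k + i)%nat) (h - k)).
  assert (Htotal : 2 ^ h = sum_f_R0 (fun i => C h i) (k - 1) + upper).
  { replace 2 with (1 + 1) by lra. rewrite binomial.
    rewrite (tech2 _ (k - 1) h) by lia.
    replace (h - S (k - 1))%nat with (h - k)%nat by lia.
    f_equal; apply sum_eq; intros i _; rewrite !pow1.
    - lra.
    - replace (S (k - 1) + i)%nat with (k + i)%nat by lia. lra. }
  assert (Hnorm : (/ 2) ^ h * 2 ^ h = 1).
  { rewrite <- Rpow_mult_distr, Rinv_l by lra. apply pow1. }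
  assert (Hpos : 0 < (/ 2) ^ h) by (apply pow_lt; lra).
  assert (Hmass : 2 ^ h <= 2 * upper) by (fold upper in Hlow; lra).
  pose proof (Rmult_le_compat_l _ _ _ (Rlt_le _ _ Hpos) Hmass) as Hscaled.
  rewrite Hnorm in Hscaled. lra.
Qed.

Lemma scale_bracket (c L h : nat) : (1 <= c)%nat -> (2 <= L)%nat -> (c * L <= h)%nat ->
  exists n, (c * L ^ S n <= h)%nat /\ (h < c * L ^ S (S n))%nat.
Proof.
  intros Hc HL Hh.
  assert (Hband : forall N, (h < c * L ^ S (S N))%nat ->
            exists n, (c * L ^ S n <= h)%nat /\ (h < c * L ^ S (S n))%nat).
  { induction N as [|N IHN]; intros HN.
    - exists 0%nat. rewrite Nat.pow_1_r. auto.
    - destruct (Nat.lt_ge_cases h (c * L ^ S (S N))) as [Hlt | Hge]; eauto. }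
  apply (Hband h).
  pose proof (Nat.pow_gt_lin_r L (S (S h)) ltac:(lia)). nia.
Qed.

Lemma pow_half_bound (L M n h : nat) : L = (2 * M)%nat ->
  (h <= 4 * L ^ S (S n))%nat ->
  INR h ^ M <= 2 ^ L * INR L ^ L * INR (L ^ n) ^ M.
Proof.
  intros HLM Hh.
  assert (Hh' : INR h <= 2 ^ 2 * INR L ^ 2 * INR (L ^ n)).
  { replace (2 ^ 2) with (INR 4) by (simpl; lra).
    rewrite <- (pow_INR L 2), <- !mult_INR. apply le_INR.
    replace (L ^ S (S n))%nat with (L ^ 2 * L ^ n)%nat in Hh by (simpl; lia).
    simpl in *. lia. }
  apply Rle_trans with ((2 ^ 2 * INR L ^ 2 * INR (L ^ n)) ^ M).
  - apply pow_incr. split; [apply pos_INR | exact Hh'].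
  - rewrite !Rpow_mult_distr, <- !pow_mult, HLM. lra.
Qed.

Lemma penalty_lower_bound (L M n h : nat) (T : R) : L = (2 * M)%nat ->
  (0 < h)%nat -> (0 < L)%nat ->
  INR h ^ M <= 2 ^ L * INR L ^ L * INR (L ^ n) ^ M -> / 2 <= T ->
  INR (fact L) / (2 ^ (2 * L + 1) * INR L ^ L) <=
  / INR h ^ M * INR (fact L) * / 2 ^ L * INR (L ^ n) ^ M * T.
Proof.
  intros HLM Hh HL Hpow HT.
  set (F := INR (fact L)); set (P := INR (L ^ n) ^ M); set (Q := INR L ^ L).
  assert (HF : 0 < F) by apply lt_0_INR, lt_O_fact.
  assert (HP : 0 < P) by (apply pow_lt, lt_0_INR; pose proof (Nat.pow_gt_lin_r L n); lia).
  assert (HQ : 0 < Q) by (apply pow_lt, lt_0_INR; lia).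
  assert (H2L : 0 < 2 ^ L) by (apply pow_lt; lra).
  assert (HH : 0 < INR h ^ M) by (apply pow_lt, lt_0_INR; lia).
  assert (Hinv : / (2 ^ L * Q * P) <= / INR h ^ M)
    by (apply Rinv_le_contravar; assumption).
  assert (Hfactor : 0 < F * / 2 ^ L * P)
    by (repeat apply Rmult_lt_0_compat; try apply Rinv_0_lt_compat; assumption).
  apply Rle_trans with (/ (2 ^ L * Q * P) * (F * / 2 ^ L * P) * / 2).
  - right. replace (2 * L + 1)%nat with (L + L + 1)%nat by lia.
    rewrite !pow_add. field. repeat split; lra.
  - replace (/ INR h ^ M * F * / 2 ^ L * P * T) with (/ INR h ^ M * (F * / 2 ^ L * P) * T)
      by ring.
    apply Rmult_le_compat.
    + apply Rmult_le_pos; [| lra].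
      left; apply Rinv_0_lt_compat; repeat apply Rmult_lt_0_compat; assumption.
    + lra.
    + apply Rmult_le_compat_r; lra.
    + exact HT.
Qed.

Lemma penalty_weaken_exponent (a b : nat) (F Q : R) : (a <= b)%nat -> 0 < F -> 0 < Q ->
  / 2 ^ b * F * / Q <= F / (2 ^ a * Q).
Proof.
  intros Hab HF HQ.
  assert (Ha : 0 < 2 ^ a) by (apply pow_lt; lra).
  assert (Hpow : 2 ^ a <= 2 ^ b) by (apply Rle_pow; lra || lia).
  unfold Rdiv. rewrite Rinv_mult.
  replace (F * (/ 2 ^ a * / Q)) with (/ 2 ^ a * F * / Q) by ring.
  apply Rmult_le_compat_r; [left; apply Rinv_0_lt_compat; lra |].
  apply Rmult_le_compat_r; [lra |].
  apply Rinv_le_contravar; lra.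
Qed.

Theorem lemma5p2 (L : nat) (m g : nat -> R) :
  (6 <= L)%nat -> Nat.Even L ->
  (forall (n h : nat), (4 * L ^ (S n) <= h)%nat ->
     m h <= main_term L h g
            - / (INR h ^ (L / 2)) * INR (fact L) * / (2 ^ L)
              * (INR (L ^ n)) ^ (L / 2)
              * sumR (2 * L ^ (S n)) h (fun j => Binomial.C h j * (/ 2) ^ h)) ->
  forall h : nat, (4 * L <= h)%nat ->
    m h <= main_term L h g
           - / (2 ^ ((5 * L + 2) / 2)) * INR (fact L) * / (INR L ^ L).
Proof.
  intros HL [M HLM] Hyp h Hh.
  destruct (scale_bracket 4 L h) as [n [Hlow Hhigh]]; try lia.
  assert (Hhalf : (L / 2 = M)%nat)
    by (subst; rewrite Nat.mul_comm; apply Nat.div_mul; lia).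
  assert (Hexp : ((5 * L + 2) / 2 = 5 * M + 1)%nat)
    by (subst; replace (5 * (2 * M) + 2)%nat with ((5 * M + 1) * 2)%nat by lia;
        apply Nat.div_mul; lia).
  specialize (Hyp n h Hlow). rewrite Hhalf in Hyp. rewrite Hexp.
  assert (Htail : / 2 <= sumR (2 * L ^ S n) h (fun j => C h j * (/ 2) ^ h)).
  { apply binomial_upper_tail_ge_half; pose proof (Nat.pow_gt_lin_r L (S n)); lia. }
  pose proof (penalty_lower_bound L M n h _ HLM ltac:(lia) ltac:(lia)
                (pow_half_bound L M n h HLM ltac:(lia)) Htail) as Hpen.
  pose proof (penalty_weaken_exponent (2 * L + 1) (5 * M + 1) (INR (fact L)) (INR L ^ L)
                ltac:(lia) (lt_0_INR _ (lt_O_fact L))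
                ltac:(apply pow_lt, lt_0_INR; lia)) as Hweaker.
  lra.
Qed.
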